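(* Let $M>0$, $0\le a<M$, $r_+=M+\sqrt{M^2-a^2}$ and $\Delta(r)=r^2-2Mr+a^2$. For $\mathcal{Q}\ge 0$ and $r>r_+$ define $$V_{\pm}(r,\mathcal Q)=\frac{2Mar\pm\sqrt{r\Delta(r)\big((1+\mathcal Q)r^3+a^2\mathcal Q(r+2M)\big)}}{r\,[\,r(r^2+a^2)+2Ma^2\,]}.$$ Then for every fixed $\mathcal Q\ge 0$, each of the functions $r\mapsto V_+(r,\mathcal Q)$ and $r\mapsto V_-(r,\mathcal Q)$ has exactly one local extremum in the interval $(r_+,\infty)$.
   Context: These are the ''pseudo potentials'' for null geodesics in the exterior of a sub-extremal Kerr spacetime in Boyer–Lindquist coordinates. For a null geodesic with $L_z\neq0$, set $\mathcal E=E/L_z$ and $\mathcal Q=Q/L_z^2$, where $E$ is the energy, $L_z$ the axial angular momentum and $Q=K-(aE-L_z)^2$ with $K$ Carter's constant. The radial function $R(r)=((r^2+a^2)E-aL_z)^2-\Delta(r)K$ satisfies $R=L_z^2\, r[r(r^2+a^2)+2Ma^2](\mathcal E-V_+(r,\mathcal Q))(\mathcal E-V_-(r,\mathcal Q))$, so $V_\pm(r,\mathcal Q)$ are the two values of $\mathcal E$ for which $r$ is a radial turning point. *)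

From Stdlib Require Import Reals.
Open Scope R_scope.

Definition Delta (M a r : R) : R := r ^ 2 - 2 * M * r + a ^ 2.

Definition rplus (M a : R) : R := M + sqrt (M ^ 2 - a ^ 2).

Definition Vroot (M a Q r : R) : R :=
  sqrt (r * Delta M a r * ((1 + Q) * r ^ 3 + a ^ 2 * Q * (r + 2 * M))).

Definition Vden (M a r : R) : R := r * (r * (r ^ 2 + a ^ 2) + 2 * M * a ^ 2).

Definition Vplus (M a Q r : R) : R := (2 * M * a * r + Vroot M a Q r) / Vden M a r.
Definition Vminus (M a Q r : R) : R := (2 * M * a * r - Vroot M a Q r) / Vden M a r.

Definition local_extremum_on (f : R -> R) (lo x : R) : Prop :=
  lo < x /\
  exists eps : R, 0 < eps /\
    ((forall y, lo < y -> Rabs (y - x) < eps -> f y <= f x) \/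
     (forall y, lo < y -> Rabs (y - x) < eps -> f x <= f y)).

From Pilot Require Import Defs.
From Stdlib Require Import Reals Lra Psatz.
From Coquelicot Require Import Coquelicot.
Open Scope R_scope.

(* Write S for the square root and D for the denominator in V±.  Differentiating gives
   V±' = ±(Cpoly - alpha V±) / (2 S D) for explicit polynomials Cpoly and alpha >= 0, and
   the two numerators phi± satisfy
     phi+ + phi- = -2 alpha S / D <= 0   and   phi+ phi- = Kpoly G / D   with Kpoly > 0,
   where G = sph_num - Q sph_den^2 vanishes exactly at the spherical photon orbits.
   Where sph_den <> 0, G = sph_den^2 (Qsph - Q), and Qsph = sph_num / sph_den^2 increases
   before and decreases after the unique zero of the concave cubic sph_den beyond r+.  Hence
   G < 0 except on an interval (c1, c2) where G > 0 (c1 = c2 = 3M when a = 0).  As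
   phi+ > 0 at r+ and phi+ < 0 at 4M, the sign of the product and of the sum force phi+ to
   change sign only at c1 and phi- only at c2: V+ increases and then decreases, V- decreases
   and then increases. *)

Lemma local_extremum_on_opp (f : R -> R) lo r :
  local_extremum_on (fun x => - f x) lo r <-> local_extremum_on f lo r.
Proof.
  unfold local_extremum_on.
  split; intros [Hr [eps [Heps Hext]]]; split; auto; exists eps; split; auto;
    destruct Hext as [H | H]; [right | left | right | left];
    intros y Hy Hye; specialize (H y Hy Hye); lra.
Qed.

Lemma not_local_extremum_of_strict_incr (f : R -> R) lo r delta :
  0 < delta -> lo <= r - delta ->
  (forall x y, r - delta < x -> x < y -> y < r + delta -> f x < f y) ->
  ~ local_extremum_on f lo r.
Proof.
  intros Hdelta Hlo Hinc [_ [eps [Heps Hext]]].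
  set (h := Rmin eps delta / 2).
  assert (Hh : 0 < h /\ h < eps /\ h < delta).
  { unfold h. pose proof (Rmin_l eps delta). pose proof (Rmin_r eps delta).
    apply Rmin_case_strong; intros; lra. }
  assert (Hleft : f (r - h) < f r) by (apply Hinc; lra).
  assert (Hright : f r < f (r + h)) by (apply Hinc; lra).
  destruct Hext as [H | H].
  - assert (f (r + h) <= f r); [|lra].
    apply H; [lra |]. replace (r + h - r) with h by ring. rewrite Rabs_pos_eq; lra.
  - assert (f r <= f (r - h)); [|lra].
    apply H; [lra |]. replace (r - h - r) with (- h) by ring. rewrite Rabs_Ropp, Rabs_pos_eq; lra.
Qed.

Lemma unique_local_extremum_of_incr_decr (f : R -> R) lo c :
  lo < c ->
  (forall x y, lo < x -> x < y -> y <= c -> f x < f y) ->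
  (forall x y, c <= x -> x < y -> f y < f x) ->
  exists! r, local_extremum_on f lo r.
Proof.
  intros Hc Hinc Hdec. exists c. split.
  - split; [exact Hc |]. exists 1. split; [lra |]. left.
    intros y Hy _. destruct (Rtotal_order y c) as [H | [H | H]].
    + left. apply Hinc; lra.
    + subst. lra.
    + left. apply Hdec; lra.
  - intros r Hr.
    destruct (Rtotal_order r c) as [H | [H | H]]; [exfalso | symmetry; exact H | exfalso].
    + pose proof (proj1 Hr) as Hlo.
      apply (not_local_extremum_of_strict_incr f lo r (Rmin (r - lo) (c - r))).
      * apply Rmin_case; lra.
      * pose proof (Rmin_l (r - lo) (c - r)). lra.
      * intros x y Hx Hxy Hy. pose proof (Rmin_l (r - lo) (c - r)).
        pose proof (Rmin_r (r - lo) (c - r)). apply Hinc; lra.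
      * exact Hr.
    + apply (not_local_extremum_of_strict_incr (fun x => - f x) lo r (r - c)); try lra.
      * intros x y Hx Hxy Hy. assert (f y < f x) by (apply Hdec; lra). lra.
      * apply local_extremum_on_opp. exact Hr.
Qed.

Lemma strict_incr_of_deriv_pos_but_one (f df : R -> R) d x y :
  x < y ->
  (forall z, x <= z <= y -> is_derive f z (df z)) ->
  (forall z, x < z < y -> z <> d -> 0 < df z) ->
  f x < f y.
Proof.
  intros Hxy Hder Hpos.
  assert (Hmvt : forall u v, x <= u -> u < v -> v <= y -> ~ (u < d < v) -> f u < f v).
  { intros u v Hu Huv Hv Hd.
    destruct (MVT_cor2 f df u v Huv) as [z [Ez Hz]].
    { intros z Hz. apply is_derive_Reals, Hder. lra. }
    assert (0 < df z).
    { apply Hpos; [lra |]. intros E. apply Hd. rewrite <- E. exact Hz. }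
    nra. }
  destruct (Rlt_dec x d), (Rlt_dec d y).
  - apply Rlt_trans with (f d); apply Hmvt; lra.
  - apply Hmvt; lra.
  - apply Hmvt; lra.
  - apply Hmvt; lra.
Qed.

Lemma unique_local_extremum_of_deriv_sign (f df : R -> R) lo c d :
  lo < c ->
  (forall x, lo < x -> is_derive f x (df x)) ->
  (forall x, lo < x < c -> x <> d -> 0 < df x) ->
  (forall x, c < x -> x <> d -> df x < 0) ->
  exists! r, local_extremum_on f lo r.
Proof.
  intros Hc Hder Hpos Hneg.
  apply (unique_local_extremum_of_incr_decr f lo c Hc).
  - intros x y Hx Hxy Hy.
    apply (strict_incr_of_deriv_pos_but_one f df d); [exact Hxy | |].
    + intros z Hz. apply Hder. lra.
    + intros z Hz Hzd. apply Hpos; [lra | exact Hzd].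
  - intros x y Hx Hxy.
    assert (- f x < - f y); [|lra].
    apply (strict_incr_of_deriv_pos_but_one (fun z => - f z) (fun z => - df z) d); [exact Hxy | |].
    + intros z Hz. apply (is_derive_opp f), Hder. lra.
    + intros z Hz Hzd. assert (df z < 0) by (apply Hneg; [lra | exact Hzd]). lra.
Qed.

Lemma unique_local_extremum_of_deriv_sign_rev (f df : R -> R) lo c d :
  lo < c ->
  (forall x, lo < x -> is_derive f x (df x)) ->
  (forall x, lo < x < c -> x <> d -> df x < 0) ->
  (forall x, c < x -> x <> d -> 0 < df x) ->
  exists! r, local_extremum_on f lo r.
Proof.
  intros Hc Hder Hneg Hpos.
  destruct (unique_local_extremum_of_deriv_sign (fun x => - f x) (fun x => - df x) lo c d Hc)
    as [r [Hr Huniq]].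
  - intros x Hx. apply (is_derive_opp f), Hder, Hx.
  - intros x Hx Hxd. assert (df x < 0) by (apply Hneg; assumption). lra.
  - intros x Hx Hxd. assert (0 < df x) by (apply Hpos; assumption). lra.
  - exists r. split.
    + apply local_extremum_on_opp. exact Hr.
    + intros r' Hr'. apply Huniq, local_extremum_on_opp, Hr'.
Qed.

Lemma pos_iff_of_no_root (g : R -> R) x y :
  x <= y ->
  (forall z, x <= z <= y -> continuity_pt g z) ->
  (forall z, x <= z <= y -> g z <> 0) ->
  (0 < g x <-> 0 < g y).
Proof.
  intros Hxy Hcont Hroot.
  assert (Hx : g x <> 0) by (apply Hroot; lra).
  assert (Hy : g y <> 0) by (apply Hroot; lra).
  destruct (Req_dec x y) as [<- | Hne]; [tauto |].
  split; intros Hpos; apply Rnot_le_lt; intros Hle.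
  - destruct (Ranalysis5.IVT_interv (fun z => - g z) x y) as [z [Hz Ez]]; try lra.
    + intros z Hz. apply continuity_pt_opp, Hcont, Hz.
    + apply (Hroot z Hz). lra.
  - destruct (Ranalysis5.IVT_interv g x y) as [z [Hz Ez]]; try lra.
    + intros z Hz. apply Hcont, Hz.
    + apply (Hroot z Hz), Ez.
Qed.

Lemma IVT_interv_strict (g : R -> R) x y :
  x < y -> (forall z, x <= z <= y -> continuity_pt g z) -> g x < 0 -> 0 < g y ->
  exists z, x < z < y /\ g z = 0.
Proof.
  intros Hxy Hcont Hx Hy.
  destruct (Ranalysis5.IVT_interv g x y Hcont Hxy Hx Hy) as [z [[Hxz Hzy] Ez]].
  exists z. split; [split |]; [destruct Hxz as [| <-] | destruct Hzy as [| ->] |]; lra.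
Qed.

Section Kerr.

Variables M a Q : R.
Hypotheses (hM : 0 < M) (ha0 : 0 <= a) (haM : a < M) (hQ : 0 <= Q).

Definition radicand (r : R) : R :=
  r * Defs.Delta M a r * ((1 + Q) * r ^ 3 + a ^ 2 * Q * (r + 2 * M)).

Definition Vsg (sg r : R) : R := (2 * M * a * r + sg * Vroot M a Q r) / Vden M a r.

Definition alpha (r : R) : R := 4 * M * a * r ^ 2 * (3 * r ^ 2 + a ^ 2).

Definition Cpoly (r : R) : R :=
  (4 * r ^ 3 + 2 * a ^ 2 * r + 2 * M * a ^ 2) * (a ^ 2 - (1 + Q) * Defs.Delta M a r)
  + 2 * (1 + Q) * (r - M) * Vden M a r.

Definition deriv_den (r : R) : R := 2 * Vroot M a Q r * Vden M a r.

Lemma rplus_bounds : M < rplus M a <= 2 * M.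
Proof.
  unfold rplus.
  assert (H0 : 0 < M ^ 2 - a ^ 2) by nra.
  pose proof (sqrt_lt_R0 _ H0). pose proof (sqrt_sqrt _ (Rlt_le _ _ H0)). nra.
Qed.

Lemma Delta_rplus : Defs.Delta M a (rplus M a) = 0.
Proof.
  unfold rplus, Defs.Delta.
  assert (H0 : 0 <= M ^ 2 - a ^ 2) by nra.
  pose proof (sqrt_sqrt _ H0). nra.
Qed.

Lemma Delta_pos x : rplus M a < x -> 0 < Defs.Delta M a x.
Proof.
  unfold rplus, Defs.Delta. intros Hx.
  assert (H0 : 0 <= M ^ 2 - a ^ 2) by nra.
  pose proof (sqrt_pos (M ^ 2 - a ^ 2)). pose proof (sqrt_sqrt _ H0). nra.
Qed.

Lemma Vden_pos x : 0 < x -> 0 < Vden M a x.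
Proof.
  intros Hx. unfold Vden.
  assert (0 <= M * a ^ 2) by (apply Rmult_le_pos; [lra | apply pow2_ge_0]).
  assert (0 < x * (x ^ 2 + a ^ 2)) by (apply Rmult_lt_0_compat; [lra | nra]).
  apply Rmult_lt_0_compat; lra.
Qed.

Lemma radicand_pos x : rplus M a < x -> 0 < radicand x.
Proof.
  intros Hx. pose proof rplus_bounds. pose proof (Delta_pos x Hx).
  assert (0 <= a ^ 2 * Q * (x + 2 * M)) by (repeat apply Rmult_le_pos; nra).
  assert (0 < (1 + Q) * x ^ 3) by (apply Rmult_lt_0_compat; [lra | apply pow_lt; lra]).
  unfold radicand. repeat apply Rmult_lt_0_compat; lra.
Qed.

Lemma radicand_rplus : radicand (rplus M a) = 0.
Proof. unfold radicand. rewrite Delta_rplus. ring. Qed.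

Lemma radicand_nonneg x : rplus M a <= x -> 0 <= radicand x.
Proof.
  intros [Hx | <-].
  - apply Rlt_le, radicand_pos, Hx.
  - rewrite radicand_rplus. lra.
Qed.

Lemma Vroot_radicand r : Vroot M a Q r = sqrt (radicand r).
Proof. reflexivity. Qed.

Lemma deriv_den_pos x : rplus M a < x -> 0 < deriv_den x.
Proof.
  intros Hx. pose proof rplus_bounds.
  assert (0 < Vroot M a Q x) by (rewrite Vroot_radicand; apply sqrt_lt_R0, radicand_pos, Hx).
  pose proof (Vden_pos x ltac:(lra)).
  unfold deriv_den. apply Rmult_lt_0_compat; [apply Rmult_lt_0_compat |]; lra.
Qed.

Lemma is_derive_Vsg sg x : sg = 1 \/ sg = -1 -> rplus M a < x ->
  is_derive (Vsg sg) x (sg * (Cpoly x - alpha x * Vsg sg x) / deriv_den x).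
Proof.
  intros Hsg Hx. pose proof rplus_bounds.
  pose proof (radicand_pos x Hx) as Hrad. pose proof (Vden_pos x ltac:(lra)) as Hden.
  unfold Vsg, deriv_den, Vroot, Vden, Defs.Delta.
  auto_derive.
  { repeat split; [exact Hrad | apply Rgt_not_eq, Hden]. }
  repeat match goal with |- context [sqrt ?u] =>
    progress replace u with (radicand x) by (unfold radicand, Defs.Delta; ring) end.
  assert (HS : sqrt (radicand x) * sqrt (radicand x) = radicand x) by (apply sqrt_sqrt; lra).
  assert (HS0 : 0 < sqrt (radicand x)) by (apply sqrt_lt_R0; exact Hrad).
  set (S := sqrt (radicand x)) in *.
  (* the two sides differ by a multiple of S^2 - radicand x *)
  match goal with |- ?L = ?R =>
    assert (E : L - R = - sg * (4 * x ^ 3 + 2 * a ^ 2 * x + 2 * M * a ^ 2)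
                          * (S * S - radicand x) / (S * Vden M a x ^ 2)) end.
  { unfold Cpoly, alpha, radicand, Vden, Defs.Delta in *.
    destruct Hsg as [-> | ->]; field; repeat split; nra. }
  rewrite HS in E. lra.
Qed.

Definition phi_plus (r : R) : R := Cpoly r - alpha r * Vplus M a Q r.
Definition phi_minus (r : R) : R := alpha r * Vminus M a Q r - Cpoly r.

Lemma is_derive_Vplus x : rplus M a < x ->
  is_derive (Vplus M a Q) x (phi_plus x / deriv_den x).
Proof.
  intros Hx.
  assert (Hext : forall r, Vsg 1 r = Vplus M a Q r)
    by (intros r; unfold Vsg, Vplus; rewrite Rmult_1_l; reflexivity).
  apply (is_derive_ext (Vsg 1)); [exact Hext |].
  replace (phi_plus x) with (1 * (Cpoly x - alpha x * Vsg 1 x))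
    by (unfold phi_plus; rewrite Hext; ring).
  apply is_derive_Vsg; [left; reflexivity | exact Hx].
Qed.

Lemma is_derive_Vminus x : rplus M a < x ->
  is_derive (Vminus M a Q) x (phi_minus x / deriv_den x).
Proof.
  intros Hx.
  assert (Hext : forall r, Vsg (-1) r = Vminus M a Q r)
    by (intros r; unfold Vsg, Vminus; f_equal; ring).
  apply (is_derive_ext (Vsg (-1))); [exact Hext |].
  replace (phi_minus x) with (-1 * (Cpoly x - alpha x * Vsg (-1) x))
    by (unfold phi_minus; rewrite Hext; ring).
  apply is_derive_Vsg; [right; reflexivity | exact Hx].
Qed.

Lemma phi_sum_nonpos x : 0 < x -> phi_plus x + phi_minus x <= 0.
Proof.
  intros Hx. pose proof (Vden_pos x Hx) as Hden.
  replace (phi_plus x + phi_minus x) with (- (2 * alpha x * Vroot M a Q x / Vden M a x))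
    by (unfold phi_plus, phi_minus, Vplus, Vminus; field; lra).
  assert (0 <= alpha x) by (unfold alpha; repeat apply Rmult_le_pos; nra).
  assert (0 <= Vroot M a Q x) by apply sqrt_pos.
  assert (0 <= 2 * alpha x * Vroot M a Q x / Vden M a x); [|lra].
  apply Rmult_le_pos; [nra | apply Rlt_le, Rinv_0_lt_compat, Hden].
Qed.

Definition sph_den (r : R) : R := - (r ^ 3 - 3 * M * r ^ 2 + a ^ 2 * r + M * a ^ 2).
Definition sph_num (r : R) : R := r ^ 3 * (4 * M * a ^ 2 - r * (r - 3 * M) ^ 2).
(* For r >= r+, Gsph r = 0 iff r is a critical point of V+ or V- (a spherical photon
   orbit); where sph_den r <> 0 this means Q = Qsph r. *)
Definition Gsph (r : R) : R := sph_num r - Q * sph_den r ^ 2.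

Definition Kpoly (r : R) : R :=
  4 * ((1 + Q) * r ^ 8 + (1 + 3 * Q) * a ^ 2 * r ^ 6 + 2 * (1 + Q) * M * a ^ 2 * r ^ 5
       + 3 * Q * a ^ 4 * r ^ 4 + 4 * Q * M * a ^ 4 * r ^ 3 + Q * a ^ 6 * r ^ 2
       + 2 * Q * M * a ^ 6 * r).

Lemma Kpoly_pos x : 0 < x -> 0 < Kpoly x.
Proof.
  intros Hx. unfold Kpoly.
  apply Rmult_lt_0_compat; [lra |].
  repeat apply Rplus_lt_le_0_compat;
    [apply Rmult_lt_0_compat; [lra | apply pow_lt, Hx]
    | repeat apply Rmult_le_pos; try apply pow_le; lra ..].
Qed.

Lemma phi_prod x : rplus M a <= x ->
  phi_plus x * phi_minus x = Kpoly x * Gsph x / Vden M a x.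
Proof.
  intros Hx. pose proof rplus_bounds.
  pose proof (Vden_pos x ltac:(lra)) as Hden.
  assert (HS : Vroot M a Q x * Vroot M a Q x = radicand x)
    by (apply sqrt_sqrt, radicand_nonneg, Hx).
  set (S := Vroot M a Q x) in *.
  assert (E : phi_plus x * phi_minus x =
     Kpoly x * Gsph x / Vden M a x
     - alpha x ^ 2 * (radicand x - S * S) / Vden M a x ^ 2).
  { unfold phi_plus, phi_minus, Vplus, Vminus. fold S.
    unfold Kpoly, Gsph, sph_num, sph_den, radicand, alpha, Cpoly, Vden, Defs.Delta in *.
    field. repeat split; nra. }
  rewrite E, HS. field. lra.
Qed.

Lemma phi_prod_neg x : rplus M a <= x -> Gsph x < 0 -> phi_plus x * phi_minus x < 0.
Proof.
  intros Hx HG. pose proof rplus_bounds. rewrite phi_prod by exact Hx.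
  apply Rdiv_neg_pos; [| apply Vden_pos; lra].
  pose proof (Kpoly_pos x ltac:(lra)). nra.
Qed.

Lemma phi_prod_pos x : rplus M a <= x -> 0 < Gsph x -> 0 < phi_plus x * phi_minus x.
Proof.
  intros Hx HG. pose proof rplus_bounds. rewrite phi_prod by exact Hx.
  apply Rdiv_lt_0_compat; [| apply Vden_pos; lra].
  apply Rmult_lt_0_compat; [apply Kpoly_pos; lra | exact HG].
Qed.

Lemma phi_plus_rplus_pos : 0 < phi_plus (rplus M a).
Proof.
  pose proof rplus_bounds. pose proof Delta_rplus as HD.
  set (r := rplus M a) in *.
  pose proof (Vden_pos r ltac:(lra)) as Hden.
  assert (Hroot : Vroot M a Q r = 0)
    by (rewrite Vroot_radicand; unfold r; rewrite radicand_rplus; apply sqrt_0).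
  (* Vroot vanishes at the horizon, leaving a positive term plus a multiple of Delta r = 0 *)
  assert (E : phi_plus r * Vden M a r =
     (r ^ 2 + a ^ 2) ^ 2 * 2 * (r - M) * (r ^ 4 + Q * (r ^ 2 + a ^ 2) ^ 2)
     + Defs.Delta M a r * (-4 * r ^ 7 * Q - 4 * r ^ 7 - 10 * r ^ 5 * a ^ 2 * Q - 2 * r ^ 5 * a ^ 2
        - 6 * r ^ 4 * M * a ^ 2 * Q + 6 * r ^ 4 * M * a ^ 2 - 8 * r ^ 3 * a ^ 4 * Q
        - 4 * r ^ 2 * M * a ^ 4 * Q - 2 * r * a ^ 6 * Q + 2 * M * a ^ 6 * Q)).
  { unfold phi_plus, Vplus. rewrite Hroot.
    unfold Cpoly, alpha, Vden, Defs.Delta in *. field. repeat split; nra. }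
  rewrite HD, Rmult_0_l, Rplus_0_r in E.
  assert (0 < phi_plus r * Vden M a r); [| nra].
  rewrite E.
  assert (0 < r ^ 2 + a ^ 2) by nra.
  assert (0 <= Q * (r ^ 2 + a ^ 2) ^ 2) by (apply Rmult_le_pos; [lra | apply pow2_ge_0]).
  assert (0 < r ^ 4 + Q * (r ^ 2 + a ^ 2) ^ 2) by (pose proof (pow_lt r 4 ltac:(lra)); lra).
  repeat apply Rmult_lt_0_compat; try apply pow_lt; lra.
Qed.

Lemma phi_plus_4M_neg : phi_plus (4 * M) < 0.
Proof.
  assert (HC : Cpoly (4 * M) < 0).
  { replace (Cpoly (4 * M)) with
      (64 * M ^ 3 * (a ^ 2 - 8 * M ^ 2)
       - Q * (512 * M ^ 5 + 192 * a ^ 2 * M ^ 3 + 10 * a ^ 4 * M))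
      by (unfold Cpoly, Vden, Defs.Delta; ring).
    assert (0 < M ^ 3) by (apply pow_lt, hM).
    assert (0 <= 512 * M ^ 5 + 192 * a ^ 2 * M ^ 3 + 10 * a ^ 4 * M)
      by (repeat apply Rplus_le_le_0_compat; repeat apply Rmult_le_pos; try apply pow_le; lra).
    assert (0 < M ^ 3 * (8 * M ^ 2 - a ^ 2)) by (apply Rmult_lt_0_compat; nra).
    assert (0 <= Q * (512 * M ^ 5 + 192 * a ^ 2 * M ^ 3 + 10 * a ^ 4 * M))
      by (apply Rmult_le_pos; lra).
    lra. }
  assert (0 <= alpha (4 * M) * Vplus M a Q (4 * M)); [| unfold phi_plus; lra].
  apply Rmult_le_pos.
  - unfold alpha. repeat apply Rmult_le_pos; nra.
  - unfold Vplus. apply Rmult_le_pos.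
    + pose proof (sqrt_pos (radicand (4 * M))). rewrite Vroot_radicand. nra.
    + apply Rlt_le, Rinv_0_lt_compat, Vden_pos. lra.
Qed.

Lemma continuous_phi_plus x : rplus M a <= x -> continuity_pt phi_plus x.
Proof.
  intros Hx. pose proof rplus_bounds.
  pose proof (Vden_pos x ltac:(lra)) as Hden.
  unfold phi_plus, Vplus.
  apply continuity_pt_minus; [unfold Cpoly, Vden, Defs.Delta; reg |].
  apply continuity_pt_mult; [unfold alpha; reg |].
  apply continuity_pt_div; [| unfold Vden; reg | lra].
  apply continuity_pt_plus; [reg |].
  apply (continuity_pt_comp radicand sqrt); [unfold radicand, Defs.Delta; reg |].
  apply continuity_pt_sqrt, radicand_nonneg, Hx.
Qed.

(* Three-point form of the concavity of sph_den on (M, +oo). *)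
Lemma sph_den_concave x y z :
  (z - x) * sph_den y - (z - y) * sph_den x - (y - x) * sph_den z
  = (y - x) * (z - y) * (z - x) * (x + y + z - 3 * M).
Proof. unfold sph_den. ring. Qed.

Lemma sph_den_rplus_pos : 0 < sph_den (rplus M a).
Proof.
  pose proof rplus_bounds. pose proof Delta_rplus as HD.
  replace (sph_den (rplus M a)) with
    (M * (rplus M a ^ 2 - a ^ 2) - rplus M a * Defs.Delta M a (rplus M a))
    by (unfold sph_den, Defs.Delta; ring).
  rewrite HD, Rmult_0_r, Rminus_0_r.
  apply Rmult_lt_0_compat; [lra |]. simpl. nra.
Qed.

Lemma sph_den_sign : 0 < a -> exists rho, rplus M a < rho < 3 * M /\ sph_den rho = 0 /\
  (forall x, rplus M a <= x < rho -> 0 < sph_den x) /\ (forall x, rho < x -> sph_den x < 0).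
Proof.
  intros ha. pose proof rplus_bounds as Hr. pose proof sph_den_rplus_pos as H0.
  set (r := rplus M a) in *.
  assert (H3 : sph_den (3 * M) < 0).
  { replace (sph_den (3 * M)) with (- (4 * M * a ^ 2)) by (unfold sph_den; ring).
    pose proof (pow_lt a 2 ha). nra. }
  destruct (IVT_interv_strict (fun x => - sph_den x) r (3 * M)) as [rho [Hrho Eroot]];
    [lra | intros; unfold sph_den; reg | lra | lra |].
  assert (Eroot' : sph_den rho = 0) by lra.
  exists rho. split; [exact Hrho |]. split; [exact Eroot' |]. split.
  - intros x [[Hx | <-] Hxrho]; [| exact H0].
    pose proof (sph_den_concave r x rho) as C. rewrite Eroot' in C.
    assert (0 < (x - r) * (rho - x) * (rho - r) * (r + x + rho - 3 * M))
      by (repeat apply Rmult_lt_0_compat; lra).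
    nra.
  - intros x Hx.
    pose proof (sph_den_concave r rho x) as C. rewrite Eroot' in C.
    assert (0 < (rho - r) * (x - rho) * (x - r) * (r + rho + x - 3 * M))
      by (repeat apply Rmult_lt_0_compat; lra).
    nra.
Qed.

Lemma Gsph_rplus_neg : Gsph (rplus M a) < 0.
Proof.
  pose proof rplus_bounds. pose proof Delta_rplus as HD.
  set (r := rplus M a) in *.
  replace (Gsph r) with
    (4 * a ^ 2 * r ^ 2 * Defs.Delta M a r - (r * (Defs.Delta M a r - (M * r - a ^ 2))) ^ 2
     - Q * sph_den r ^ 2) by (unfold Gsph, sph_num, Defs.Delta; ring).
  rewrite HD.
  assert (0 < r * (M * r - a ^ 2)) by (apply Rmult_lt_0_compat; nra).
  assert (0 <= Q * sph_den r ^ 2) by (apply Rmult_le_pos; [lra | apply pow2_ge_0]).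
  nra.
Qed.

Lemma Gsph_4M_neg : Gsph (4 * M) < 0.
Proof.
  replace (Gsph (4 * M)) with (- (256 * M ^ 4 * (M ^ 2 - a ^ 2)) - Q * sph_den (4 * M) ^ 2)
    by (unfold Gsph, sph_num; ring).
  assert (0 < M ^ 4 * (M ^ 2 - a ^ 2)) by (apply Rmult_lt_0_compat; [apply pow_lt | ]; nra).
  assert (0 <= Q * sph_den (4 * M) ^ 2) by (apply Rmult_le_pos; [lra | apply pow2_ge_0]).
  lra.
Qed.

Lemma Gsph_pos_at_sph_den_root x : sph_den x = 0 -> M < x < 3 * M -> 0 < Gsph x.
Proof.
  intros Hroot Hx.
  assert (E : (x + M) * (4 * M * a ^ 2 - x * (x - 3 * M) ^ 2) =
     x * (3 * M - x) * (x + 3 * M) * (x - M) - 4 * M * sph_den x) by (unfold sph_den; ring).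
  rewrite Hroot in E.
  assert (0 < x * (3 * M - x) * (x + 3 * M) * (x - M)) by (repeat apply Rmult_lt_0_compat; lra).
  assert (0 < 4 * M * a ^ 2 - x * (x - 3 * M) ^ 2) by nra.
  unfold Gsph, sph_num. rewrite Hroot.
  assert (0 < x ^ 3) by (apply pow_lt; lra).
  nra.
Qed.

Definition Qsph (r : R) : R := sph_num r / sph_den r ^ 2.

Lemma Gsph_Qsph x : sph_den x <> 0 -> Gsph x = sph_den x ^ 2 * (Qsph x - Q).
Proof. intros H. unfold Gsph, Qsph. field. exact H. Qed.

Lemma Gsph_neg_of_Qsph x : sph_den x <> 0 -> Qsph x < Q -> Gsph x < 0.
Proof.
  intros H HQ. rewrite Gsph_Qsph by exact H.
  pose proof (pow2_gt_0 _ H). nra.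
Qed.

Lemma Gsph_pos_of_Qsph x : sph_den x <> 0 -> Q < Qsph x -> 0 < Gsph x.
Proof.
  intros H HQ. rewrite Gsph_Qsph by exact H.
  apply Rmult_lt_0_compat; [apply pow2_gt_0, H | lra].
Qed.

Lemma Qsph_of_Gsph_root x : sph_den x <> 0 -> Gsph x = 0 -> Qsph x = Q.
Proof.
  intros H HG. rewrite Gsph_Qsph in HG by exact H.
  apply Rmult_integral in HG as [HG | HG]; [| lra].
  pose proof (pow2_gt_0 _ H). lra.
Qed.

Definition dQsph (r : R) : R :=
  4 * a ^ 2 * r ^ 2 * (r + 3 * M) * ((r - M) ^ 3 + M * (M ^ 2 - a ^ 2)) / sph_den r ^ 3.

Lemma is_derive_Qsph x : sph_den x <> 0 -> is_derive Qsph x (dQsph x).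
Proof.
  intros H. unfold dQsph, Qsph, sph_num. unfold sph_den in *.
  auto_derive.
  - rewrite !Rmult_1_r. apply Rmult_integral_contrapositive. split; intros E; apply H; lra.
  - field. intros E. apply H. lra.
Qed.

Lemma dQsph_num_pos x : 0 < a -> M < x ->
  0 < 4 * a ^ 2 * x ^ 2 * (x + 3 * M) * ((x - M) ^ 3 + M * (M ^ 2 - a ^ 2)).
Proof.
  intros ha Hx.
  assert (0 < (x - M) ^ 3) by (apply pow_lt; lra).
  assert (0 < M * (M ^ 2 - a ^ 2)) by (apply Rmult_lt_0_compat; nra).
  repeat apply Rmult_lt_0_compat; try apply pow_lt; lra.
Qed.

Lemma Qsph_strict_incr x y : 0 < a -> M < x -> x < y ->
  (forall z, x <= z <= y -> 0 < sph_den z) -> Qsph x < Qsph y.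
Proof.
  intros ha Hx Hxy Hpos.
  apply (incr_function_le Qsph x y dQsph); simpl; [| | lra | lra | lra].
  - intros z Hxz Hzy. apply is_derive_Qsph. specialize (Hpos z (conj Hxz Hzy)). lra.
  - intros z Hxz Hzy. apply Rdiv_lt_0_compat.
    + apply dQsph_num_pos; lra.
    + apply pow_lt, Hpos. lra.
Qed.

Lemma Qsph_strict_decr x y : 0 < a -> M < x -> x < y ->
  (forall z, x <= z <= y -> sph_den z < 0) -> Qsph y < Qsph x.
Proof.
  intros ha Hx Hxy Hneg.
  assert (- Qsph x < - Qsph y); [| lra].
  apply (incr_function_le (fun z => - Qsph z) x y (fun z => - dQsph z));
    simpl; [| | lra | lra | lra].
  - intros z Hxz Hzy. apply (is_derive_opp Qsph), is_derive_Qsph.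
    specialize (Hneg z (conj Hxz Hzy)). lra.
  - intros z Hxz Hzy. specialize (Hneg z (conj Hxz Hzy)).
    assert (dQsph z < 0); [| lra].
    apply Rdiv_pos_neg; [apply dQsph_num_pos; lra |].
    replace (sph_den z ^ 3) with (- (- sph_den z) ^ 3) by ring.
    pose proof (pow_lt (- sph_den z) 3 ltac:(lra)). lra.
Qed.

Section Rotating.

Hypothesis ha : 0 < a.
Variable rho : R.
Hypotheses (Hrho : rplus M a < rho < 3 * M) (Hroot : sph_den rho = 0)
  (Hbefore : forall x, rplus M a <= x < rho -> 0 < sph_den x)
  (Hafter : forall x, rho < x -> sph_den x < 0).

Lemma Gsph_sign_inner : exists c1, rplus M a < c1 < rho /\
  (forall x, rplus M a <= x < c1 -> Gsph x < 0) /\ (forall x, c1 < x <= rho -> 0 < Gsph x).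
Proof.
  pose proof rplus_bounds. pose proof Gsph_rplus_neg as G0.
  pose proof (Gsph_pos_at_sph_den_root rho Hroot ltac:(lra)) as G1.
  destruct (IVT_interv_strict Gsph (rplus M a) rho) as [c1 [Hc1 Ec1]];
    [lra | intros; unfold Gsph, sph_num, sph_den; reg | lra | lra |].
  assert (HQ : Qsph c1 = Q)
    by (apply Qsph_of_Gsph_root; [apply Rgt_not_eq, Hbefore; lra | exact Ec1]).
  exists c1. split; [exact Hc1 |]. split.
  - intros x Hx. apply Gsph_neg_of_Qsph; [apply Rgt_not_eq, Hbefore; lra |].
    rewrite <- HQ. apply Qsph_strict_incr; try lra. intros z Hz. apply Hbefore. lra.
  - intros x [Hx [Hxrho | ->]]; [| exact G1].
    apply Gsph_pos_of_Qsph; [apply Rgt_not_eq, Hbefore; lra |].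
    rewrite <- HQ. apply Qsph_strict_incr; try lra. intros z Hz. apply Hbefore. lra.
Qed.

Lemma Gsph_sign_outer : exists c2, rho < c2 < 4 * M /\
  (forall x, rho <= x < c2 -> 0 < Gsph x) /\ (forall x, c2 < x -> Gsph x < 0).
Proof.
  pose proof rplus_bounds. pose proof Gsph_4M_neg as G0.
  pose proof (Gsph_pos_at_sph_den_root rho Hroot ltac:(lra)) as G1.
  destruct (IVT_interv_strict (fun x => - Gsph x) rho (4 * M)) as [c2 [Hc2 Ec2]];
    [lra | intros; unfold Gsph, sph_num, sph_den; reg | lra | lra |].
  assert (Ec2' : Gsph c2 = 0) by lra.
  assert (HQ : Qsph c2 = Q)
    by (apply Qsph_of_Gsph_root; [apply Rlt_not_eq, Hafter; lra | exact Ec2']).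
  exists c2. split; [exact Hc2 |]. split.
  - intros x [[Hx | <-] Hxc2]; [| exact G1].
    apply Gsph_pos_of_Qsph; [apply Rlt_not_eq, Hafter; lra |].
    rewrite <- HQ. apply Qsph_strict_decr; try lra. intros z Hz. apply Hafter. lra.
  - intros x Hx. apply Gsph_neg_of_Qsph; [apply Rlt_not_eq, Hafter; lra |].
    rewrite <- HQ. apply Qsph_strict_decr; try lra. intros z Hz. apply Hafter. lra.
Qed.

End Rotating.

Lemma Gsph_sign_structure : exists c1 c2, rplus M a < c1 <= c2 /\ c2 < 4 * M /\
  (forall x, rplus M a <= x < c1 -> Gsph x < 0) /\
  (forall x, c1 < x < c2 -> 0 < Gsph x) /\
  (forall x, c2 < x -> Gsph x < 0).
Proof.
  pose proof rplus_bounds.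
  destruct (Req_dec a 0) as [Ha | Ha].
  - (* a = 0: both extrema sit at the photon sphere r = 3M *)
    assert (E : forall x, Gsph x = - ((1 + Q) * x ^ 4 * (x - 3 * M) ^ 2))
      by (intros x; unfold Gsph, sph_num, sph_den; rewrite Ha; ring).
    assert (Hneg : forall x, 0 < x -> x <> 3 * M -> Gsph x < 0).
    { intros x Hx Hne. rewrite E.
      assert (0 < (1 + Q) * x ^ 4 * (x - 3 * M) ^ 2); [| lra].
      apply Rmult_lt_0_compat; [apply Rmult_lt_0_compat; [lra | apply pow_lt, Hx] |].
      apply pow2_gt_0. lra. }
    rewrite Ha in *. exists (3 * M), (3 * M).
    split; [lra |]. split; [lra |]. split; [| split].
    + intros x Hx. apply Hneg; lra.
    + intros x Hx. lra.
    + intros x Hx. apply Hneg; lra.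
  - destruct (sph_den_sign ltac:(lra)) as [rho [Hrho [Hroot [Hbefore Hafter]]]].
    destruct (Gsph_sign_inner ltac:(lra) rho Hrho Hroot Hbefore) as [c1 [Hc1 [G1 G2]]].
    destruct (Gsph_sign_outer ltac:(lra) rho Hrho Hroot Hafter) as [c2 [Hc2 [G3 G4]]].
    exists c1, c2. split; [lra |]. split; [lra |]. split; [exact G1 |]. split; [| exact G4].
    intros x Hx. destruct (Rle_lt_dec x rho); [apply G2 | apply G3]; lra.
Qed.

Lemma phi_plus_neq0 x : rplus M a <= x -> Gsph x < 0 -> phi_plus x <> 0.
Proof.
  intros Hx HG E. pose proof (phi_prod_neg x Hx HG) as P.
  rewrite E, Rmult_0_l in P. lra.
Qed.

Lemma phi_plus_pos_of_Gsph_neg x : rplus M a <= x ->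
  (forall z, rplus M a <= z <= x -> Gsph z < 0) -> 0 < phi_plus x.
Proof.
  intros Hx HG.
  apply (pos_iff_of_no_root phi_plus (rplus M a) x Hx); [| | exact phi_plus_rplus_pos].
  - intros z Hz. apply continuous_phi_plus. lra.
  - intros z Hz. apply phi_plus_neq0; [lra | apply HG, Hz].
Qed.

Lemma phi_plus_neg_of_Gsph_neg x : rplus M a <= x ->
  (forall z, Rmin x (4 * M) <= z <= Rmax x (4 * M) -> Gsph z < 0) -> phi_plus x < 0.
Proof.
  intros Hx HG. pose proof rplus_bounds. pose proof phi_plus_4M_neg.
  assert (Hstep : forall u v, rplus M a <= u -> u <= v ->
    (forall z, u <= z <= v -> Gsph z < 0) -> (0 < - phi_plus u <-> 0 < - phi_plus v)).
  { intros u v Hu Huv HGuv. apply (pos_iff_of_no_root (fun z => - phi_plus z) u v Huv).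
    - intros z Hz. apply continuity_pt_opp, continuous_phi_plus. lra.
    - intros z Hz. apply Ropp_neq_0_compat, phi_plus_neq0; [lra | apply HGuv, Hz]. }
  destruct (Rle_lt_dec x (4 * M)) as [Hle | Hlt].
  - rewrite Rmin_left, Rmax_right in HG by lra.
    assert (0 < - phi_plus x); [| lra].
    apply (Hstep x (4 * M)); [lra | lra | exact HG | lra].
  - rewrite Rmin_right, Rmax_left in HG by lra.
    assert (0 < - phi_plus x); [| lra].
    apply (Hstep (4 * M) x); [lra | lra | exact HG | lra].
Qed.

Lemma phi_minus_sign_of_Gsph_neg x : rplus M a <= x -> Gsph x < 0 ->
  (0 < phi_plus x -> phi_minus x < 0) /\ (phi_plus x < 0 -> 0 < phi_minus x).
Proof.
  intros Hx HG. pose proof (phi_prod_neg x Hx HG).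
  split; intros; nra.
Qed.

Lemma phi_neg_of_Gsph_pos x : rplus M a <= x -> 0 < Gsph x ->
  phi_plus x < 0 /\ phi_minus x < 0.
Proof.
  intros Hx HG. pose proof rplus_bounds.
  pose proof (phi_prod_pos x Hx HG). pose proof (phi_sum_nonpos x ltac:(lra)).
  split; nra.
Qed.

Lemma phi_sign_pattern : exists c1 c2, rplus M a < c1 <= c2 /\
  (forall x, rplus M a < x < c1 -> 0 < phi_plus x) /\
  (forall x, c1 < x -> x <> c2 -> phi_plus x < 0) /\
  (forall x, rplus M a < x < c2 -> x <> c1 -> phi_minus x < 0) /\
  (forall x, c2 < x -> 0 < phi_minus x).
Proof.
  pose proof rplus_bounds.
  destruct Gsph_sign_structure as (c1 & c2 & Hc & Hc2 & Gin & Gmid & Gout).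
  assert (Pin : forall x, rplus M a <= x < c1 -> 0 < phi_plus x)
    by (intros x Hx; apply phi_plus_pos_of_Gsph_neg; [lra |]; intros z Hz; apply Gin; lra).
  assert (Pout : forall x, c2 < x -> phi_plus x < 0).
  { intros x Hx. apply phi_plus_neg_of_Gsph_neg; [lra |].
    intros z Hz. apply Gout.
    pose proof (Rmin_glb_lt x (4 * M) c2 Hx Hc2). lra. }
  exists c1, c2. split; [exact Hc |]. split; [| split; [| split]].
  - intros x Hx. apply Pin. lra.
  - intros x Hx Hxc2. destruct (Rtotal_order x c2) as [Hlt | [Heq | Hgt]].
    + apply phi_neg_of_Gsph_pos; [lra | apply Gmid; lra].
    + contradiction.
    + apply Pout, Hgt.
  - intros x Hx Hxc1. destruct (Rtotal_order x c1) as [Hlt | [Heq | Hgt]].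
    + apply (phi_minus_sign_of_Gsph_neg x); [lra | apply Gin; lra | apply Pin; lra].
    + contradiction.
    + apply phi_neg_of_Gsph_pos; [lra | apply Gmid; lra].
  - intros x Hx. apply (phi_minus_sign_of_Gsph_neg x); [lra | apply Gout, Hx | apply Pout, Hx].
Qed.

End Kerr.

Theorem lemma2 (M a : R) (hM : 0 < M) (ha0 : 0 <= a) (haM : a < M) :
  forall Q : R, 0 <= Q ->
    (exists! r : R, local_extremum_on (fun s => Vplus M a Q s) (rplus M a) r) /\
    (exists! r : R, local_extremum_on (fun s => Vminus M a Q s) (rplus M a) r).
Proof.
  intros Q hQ.
  destruct (phi_sign_pattern M a Q hM ha0 haM hQ)
    as (c1 & c2 & Hc & Hplus_in & Hplus_out & Hminus_in & Hminus_out).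
  pose proof (deriv_den_pos M a Q hM ha0 haM) as Hw.
  split.
  - apply (unique_local_extremum_of_deriv_sign _ (fun x => phi_plus M a Q x / deriv_den M a Q x)
             (rplus M a) c1 c2); [lra | | |].
    + intros x Hx. apply is_derive_Vplus; assumption.
    + intros x Hx _. apply Rdiv_lt_0_compat; [apply Hplus_in, Hx | apply Hw; lra].
    + intros x Hx Hxc2. apply Rdiv_neg_pos; [apply Hplus_out; assumption | apply Hw; lra].
  - apply (unique_local_extremum_of_deriv_sign_rev _
             (fun x => phi_minus M a Q x / deriv_den M a Q x)
             (rplus M a) c2 c1); [lra | | |].
    + intros x Hx. apply is_derive_Vminus; assumption.
    + intros x Hx Hxc1. apply Rdiv_neg_pos; [apply Hminus_in; assumption | apply Hw; lra].
    + intros x Hx _. apply Rdiv_lt_0_compat; [apply Hminus_out, Hx | apply Hw; lra].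
Qed.
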